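(* Let $V$ be a real vector space endowed with some topology and $X$ a convex cone in $V$ with $0\in X$. Suppose $w\in\mathbb{R}$, $f\in P_X$, and $R$ is a locally nonsatiated total preorder on $X$. If $C\subseteq X$ is a convex cone in $V$ and $R$ is $C$-antichain-convex, then $$\mathcal{M}(R,B^w_{f,X})\neq\emptyset\ \Longrightarrow\ \mathcal{M}(R,B^w_{f,X})=\mathcal{M}(R^{\operatorname{co}},B^w_{f,X}).$$
   Context: A cone in $V$ is a subset $K$ with $\lambda K\subseteq K$ for all $\lambda>0$ (possibly empty, need not contain $0$). $V^*$ denotes the continuous linear functionals on $V$; $P_X=\{f\in V^*: f(x)>0\text{ for all }x\in X\setminus\{0\}\}$; $F^w_f=\{v\in V:f(v)\le w\}$, $B^w_{f,X}=F^w_f\cap X$. A set $A$ is $C$-antichain-convex iff for all $x,y\in A$, $\lambda\in[0,1]$ with $y-x\notin C\cup(-C)$, $\lambda x+(1-\lambda)y\in A$. For a relation $R\subseteq X\times X$, $R(x)=\{t\in X:(t,x)\in R\}$; $R$ is total iff for all $s,t$, $t\in R(s)$ or $s\in R(t)$; transitive iff $r\in R(s)$ and $s\in R(t)$ imply $r\in R(t)$; a total preorder is a total transitive relation; $R$ is $C$-antichain-convex iff each $R(x)$ is $C$-antichain-convex; $R$ is locally nonsatiated iff $x\in\operatorname{cl}(\{y\in X:y\in R(x),\ x\notin R(y)\})$ for all $x\in X$. The convexification $R^{\operatorname{co}}$ is the relation on $X$ with $R^{\operatorname{co}}(x)=\operatorname{co}(R(x))$. For $S\subseteq X$ and a relation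 $Q$ on $X$, $m\in S$ is $Q$-maximal on $S$ iff for every $s\in S$ with $s\in Q(m)$, $m\in Q(s)$; $\mathcal{M}(Q,S)$ is the set of these. *)

From HB Require Import structures.
From mathcomp Require Import all_boot all_order all_algebra.
From mathcomp Require Import all_classical all_reals topology normedtype.
Set Implicit Arguments. Unset Strict Implicit. Unset Printing Implicit Defensive.
Import Order.TTheory GRing.Theory Num.Theory numFieldNormedType.Exports.
Local Open Scope ring_scope.
Local Open Scope classical_set_scope.

Section Defs.
Variables (R : realType) (V : lmodType R).

Definition is_topology (op : set (set V)) : Prop :=
  [/\ op setT, op set0,
      (forall (I : Type) (F : I -> set V), (forall i, op (F i)) ->
          op (\bigcup_(i in setT) F i))
    & (forall A B, op A -> op B -> op (A `&` B))].

Definition clos (op : set (set V)) (A : set V) : set V :=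
  [set x | forall U, op U -> U x -> exists y, U y /\ A y].

Definition cone (K : set V) : Prop :=
  forall (l : R) x, 0 < l -> K x -> K (l *: x).

Definition convex_set (K : set V) : Prop :=
  forall x y (l : R), K x -> K y -> 0 <= l <= 1 -> K (l *: x + (1 - l) *: y).

Definition co (A : set V) : set V :=
  [set x | forall K, convex_set K -> A `<=` K -> K x].

Definition dual_elt (op : set (set V)) (f : V -> R) : Prop :=
  (forall (a : R) x y, f (a *: x + y) = a * f x + f y) /\
  (forall U : set R, open U -> op (f @^-1` U)).

Definition P_set (op : set (set V)) (X : set V) (f : V -> R) : Prop :=
  dual_elt op f /\ (forall x, X x -> x <> 0 -> 0 < f x).

Definition Bset (w : R) (f : V -> R) (X : set V) : set V :=
  [set v | f v <= w] `&` X.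

(* A relation Rel on X: Rel t x means (t, x) \in R; R(x) = {t in X | Rel t x}. *)
Definition relset (X : set V) (Rel : V -> V -> Prop) (x : V) : set V :=
  [set t | X t /\ Rel t x].

Definition rel_on (X : set V) (Rel : V -> V -> Prop) : Prop :=
  forall t x, Rel t x -> X t /\ X x.

Definition rel_total (X : set V) (Rel : V -> V -> Prop) : Prop :=
  forall s t, X s -> X t -> Rel t s \/ Rel s t.

Definition rel_trans (X : set V) (Rel : V -> V -> Prop) : Prop :=
  forall r s t, X r -> X s -> X t -> Rel r s -> Rel s t -> Rel r t.

Definition total_preorder (X : set V) (Rel : V -> V -> Prop) : Prop :=
  rel_total X Rel /\ rel_trans X Rel.

Definition antichain_convex (C A : set V) : Prop :=
  forall x y (l : R), A x -> A y -> 0 <= l <= 1 ->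
    ~ (C (y - x) \/ C (- (y - x))) -> A (l *: x + (1 - l) *: y).

Definition rel_antichain_convex (C X : set V) (Rel : V -> V -> Prop) : Prop :=
  forall x, X x -> antichain_convex C (relset X Rel x).

Definition locally_nonsatiated (op : set (set V)) (X : set V)
    (Rel : V -> V -> Prop) : Prop :=
  forall x, X x -> clos op [set y | X y /\ Rel y x /\ ~ Rel x y] x.

Definition rel_co (X : set V) (Rel : V -> V -> Prop) : V -> V -> Prop :=
  fun t x => X t /\ X x /\ co (relset X Rel x) t.

Definition maximals (X : set V) (Q : V -> V -> Prop) (S : set V) : set V :=
  [set m | S m /\ forall s, S s -> Q s m -> Q m s].

End Defs.

From HB Require Import structures.
From mathcomp Require Import all_boot all_order all_algebra.
From mathcomp Require Import all_classical all_reals topology normedtype.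
From mathcomp Require Import lra.
Set Implicit Arguments. Unset Strict Implicit. Unset Printing Implicit Defensive.
Import Order.TTheory GRing.Theory Num.Theory numFieldNormedType.Exports.
Local Open Scope ring_scope.
Local Open Scope classical_set_scope.

(* Let m be R-maximal on the budget set B. Local nonsatiation forces every
   alternative at least as good as m to cost at least w. The set
   {f > w} \cup R(m) is then convex: a convex combination of points of cost
   >= w costs > w unless both points lie on the hyperplane {f = w}, and two
   distinct points there are C-incomparable because f is strictly positive on
   C \ {0}, so antichain convexity keeps their combinations in R(m). Hence
   co R(m) \cap B is included in R(m), and with totality and transitivity this
   makes R-maximality and R^co-maximality on B coincide. *)

Section LinearFunctional.
Variables (R : pzRingType) (V : lmodType R) (f : V -> R).
Hypothesis f_lin : forall (a : R) x y, f (a *: x + y) = a * f x + f y.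

Lemma lfunc0 : f 0 = 0.
Proof.
have := f_lin 1 0 0; rewrite scaler0 addr0 mul1r.
by rewrite -[f 0 in LHS]addr0 => /addrI <-.
Qed.

Lemma lfuncD x y : f (x + y) = f x + f y.
Proof. by rewrite -[x in LHS]scale1r f_lin mul1r. Qed.

Lemma lfuncZ (a : R) x : f (a *: x) = a * f x.
Proof. by rewrite -[a *: x]addr0 f_lin lfunc0 addr0. Qed.

Lemma lfuncN x : f (- x) = - f x.
Proof. by rewrite -scaleN1r lfuncZ mulN1r. Qed.

Lemma lfuncB x y : f (x - y) = f x - f y.
Proof. by rewrite lfuncD lfuncN. Qed.

End LinearFunctional.

Section LevelSets.
Variables (R : realType) (V : lmodType R) (f : V -> R).
Hypothesis f_lin : forall (a : R) x y, f (a *: x + y) = a * f x + f y.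

Definition level_convex (A : set V) : Prop :=
  forall x y (l : R), A x -> A y -> f x = f y -> 0 <= l <= 1 ->
    A (l *: x + (1 - l) *: y).

Lemma lfunc_comb (l : R) x y :
  f (l *: x + (1 - l) *: y) = l * f x + (1 - l) * f y.
Proof. by rewrite (lfuncD f_lin) !(lfuncZ f_lin). Qed.

Lemma convex_setU_gt (w : R) (A : set V) :
  A `<=` [set v | w <= f v] -> level_convex A ->
  convex_set ([set v | w < f v] `|` A).
Proof.
move=> A_ge A_level x y l Kx Ky /andP[l_ge0 l_le1].
have K_ge v : ([set v | w < f v] `|` A) v -> w <= f v by case=> [/ltW|/A_ge].
have [-> | l_neq0] := eqVneq l 0; first by rewrite scale0r add0r subr0 scale1r.
have [-> | l_neq1] := eqVneq l 1; first by rewrite scale1r subrr scale0r addr0.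
have l_gt0 : 0 < l by rewrite lt_def l_neq0.
have l_lt1 : l < 1 by rewrite lt_neqAle l_neq1.
have [fx_gt | fx_le] := ltP w (f x).
  by left; rewrite /= lfunc_comb; have := K_ge _ Ky; nra.
have [fy_gt | fy_le] := ltP w (f y).
  by left; rewrite /= lfunc_comb; have := K_ge _ Kx; nra.
have fx_eq : f x = w by apply/eqP; rewrite eq_le fx_le K_ge.
have fy_eq : f y = w by apply/eqP; rewrite eq_le fy_le K_ge.
right; apply: A_level; rewrite ?fx_eq ?fy_eq ?l_ge0 ?l_le1 //.
- by case: Kx => //=; rewrite fx_eq ltxx.
- by case: Ky => //=; rewrite fy_eq ltxx.
Qed.

Lemma co_level_convex_sub (w : R) (A : set V) :
  A `<=` [set v | w <= f v] -> level_convex A ->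
  co A `&` [set v | f v <= w] `<=` A.
Proof.
move=> A_ge A_level m [co_m fm_le].
have : ([set v | w < f v] `|` A) m.
  by apply: co_m; [exact: convex_setU_gt | move=> ? ?; right].
by case=> //= fm_gt; move: fm_le => /=; rewrite leNgt fm_gt.
Qed.

Lemma pos_kernel_eq0 (C : set V) d :
  (forall x, C x -> x <> 0 -> 0 < f x) -> C d -> f d = 0 -> d = 0.
Proof.
move=> f_pos Cd fd0; apply: contrapT => d_neq0.
by have := f_pos d Cd d_neq0; rewrite fd0 ltxx.
Qed.

Lemma antichain_level_convex (C A : set V) :
  (forall x, C x -> x <> 0 -> 0 < f x) -> antichain_convex C A ->
  level_convex A.
Proof.
move=> f_pos A_conv x y l Ax Ay fxy l01.
have [<- | x_neq_y] := pselect (x = y).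
  by rewrite -scalerDl addrC subrK scale1r.
apply: A_conv => // -[C_yx | C_xy]; apply: x_neq_y.
- apply/esym/subr0_eq/(pos_kernel_eq0 f_pos C_yx).
  by rewrite (lfuncB f_lin) fxy subrr.
- rewrite opprB in C_xy; apply/subr0_eq/(pos_kernel_eq0 f_pos C_xy).
  by rewrite (lfuncB f_lin) fxy subrr.
Qed.

End LevelSets.

Section Maximals.
Variables (R : realType) (V : lmodType R) (X : set V) (Rel : V -> V -> Prop).
Hypotheses (Rel_on : rel_on X Rel) (Rel_tot : rel_total X Rel).

Lemma sub_co (A : set V) : A `<=` co A.
Proof. by move=> x Ax K _; apply. Qed.

Lemma rel_co_of_rel t x : Rel t x -> rel_co X Rel t x.
Proof.
move=> Rtx; have [Xt Xx] := Rel_on Rtx.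
by split; [|split; [|exact: sub_co]].
Qed.

Lemma maximal_rel_total (S : set V) m s :
  S `<=` X -> maximals X Rel S m -> S s -> Rel m s.
Proof.
move=> S_X [Sm m_max] Ss.
by have [|/(m_max _ Ss)] := Rel_tot (S_X _ Ss) (S_X _ Sm).
Qed.

Lemma maximals_sub_co (S : set V) m :
  S `<=` X -> maximals X Rel S m -> maximals X (rel_co X Rel) S m.
Proof.
move=> S_X max_m; split; first by case: max_m.
move=> s Ss _; apply: rel_co_of_rel; exact: maximal_rel_total max_m Ss.
Qed.

Hypothesis Rel_tr : rel_trans X Rel.

Lemma maximals_co_sub (S : set V) ms m :
  S `<=` X -> maximals X Rel S ms ->
  co (relset X Rel ms) `&` S `<=` relset X Rel ms ->
  maximals X (rel_co X Rel) S m -> maximals X Rel S m.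
Proof.
move=> S_X max_ms co_S_sub [Sm m_max]; split => // s Ss Rsm.
have [Xm Xs Xms] := And3 (S_X _ Sm) (S_X _ Ss) (S_X _ (proj1 max_ms)).
have Rms_s : Rel ms s := maximal_rel_total S_X max_ms Ss.
have Rms_m : Rel ms m := Rel_tr Xms Xs Xm Rms_s Rsm.
have [_ [_ co_m]] := m_max _ (proj1 max_ms) (rel_co_of_rel Rms_m).
have [_ Rm_ms] := co_S_sub _ (conj co_m Sm).
exact: Rel_tr Xm Xms Xs Rm_ms Rms_s.
Qed.

Lemma maximal_budget_upper_ge (op : set (set V)) (f : V -> R) (w : R) ms :
  op (f @^-1` [set r | r < w]) -> locally_nonsatiated op X Rel ->
  maximals X Rel (Bset w f X) ms -> relset X Rel ms `<=` [set v | w <= f v].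
Proof.
move=> op_lt lns [[_ Xms] ms_max] t [Xt Rt_ms] /=; rewrite leNgt.
apply/negP => ft_lt.
have [y [/= fy_lt [Xy [Ry_t nRt_y]]]] := lns t Xt _ op_lt ft_lt.
have Ry_ms : Rel y ms := Rel_tr Xy Xt Xms Ry_t Rt_ms.
have Rms_y : Rel ms y by apply: ms_max; first by split => //=; exact: ltW.
by apply: nRt_y; exact: Rel_tr Xt Xms Xy Rt_ms Rms_y.
Qed.

End Maximals.

Theorem theorem15 (R : realType) (V : lmodType R) (op : set (set V))
  (Htop : is_topology op)
  (X : set V) (HXcone : cone X) (HXconv : convex_set X) (HX0 : X 0)
  (w : R) (f : V -> R) (Hf : P_set op X f)
  (Rel : V -> V -> Prop) (HRon : rel_on X Rel) (HRpre : total_preorder X Rel)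
  (HRlns : locally_nonsatiated op X Rel)
  (C : set V) (HCX : C `<=` X) (HCcone : cone C) (HCconv : convex_set C)
  (HRC : rel_antichain_convex C X Rel) :
  maximals X Rel (Bset w f X) !=set0 ->
  maximals X Rel (Bset w f X) = maximals X (rel_co X Rel) (Bset w f X).
Proof.
case=> ms max_ms; case: Hf => [[f_lin f_cont] f_pos]; case: HRpre => Rtot Rtr.
have B_X : Bset w f X `<=` X by move=> ? [].
have f_posC x : C x -> x <> 0 -> 0 < f x by move=> Cx; apply/f_pos/HCX.
have upper_ge : relset X Rel ms `<=` [set v | w <= f v] :=
  maximal_budget_upper_ge Rtr (f_cont _ (@open_lt _ w)) HRlns max_ms.
have upper_level : level_convex f (relset X Rel ms) :=
  antichain_level_convex f_lin f_posC (HRC _ (proj2 (proj1 max_ms))).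
have co_upper_B : co (relset X Rel ms) `&` Bset w f X `<=` relset X Rel ms.
  move=> m [co_m [fm_le _]].
  by apply: (co_level_convex_sub f_lin upper_ge upper_level); split.
apply/seteqP; split=> m max_m.
- exact (maximals_sub_co HRon Rtot B_X max_m).
- exact (maximals_co_sub HRon Rtot Rtr B_X max_ms co_upper_B max_m).
Qed.
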